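(* Let $\omega\in N\check C^n(X\times E)$ be a non-flat differential $n$-cochain on a product cover and $\eta=\check d\omega$. For multi-indices $(a)=(a_1,\dots,a_r)$ and $(b)=(b_1,\dots,b_k)$, $$T^{(a)}_{(b)}\eta=(-1)^{|(a)|+|(b)|+1}\,d\,T^{(a)}_{(b)}\omega+(-1)^{|(b)|+1}[\delta_aT^{(\cdot)}_{(b)}\omega]^{(a)}+[\delta_bT^{(a)}_{(\cdot)}\omega]_{(b)},$$ where the second term is absent if $|(a)|=1$ and the third term is absent if $|(b)|=1$.
   Context: $X,E$ are closed smooth manifolds with open covers $(U_a)_{a\in\mathcal A}$ and $(U_b)_{b\in\mathcal B}$; the product cover of $X\times E$ consists of $U_{(ab)}=U_a\times U_b$. A non-flat differential $n$-cochain on it is $(H,\omega^n_{(a_1b_1)},\omega^{n-1}_{(a_1b_1)(a_2b_2)},\dots,\omega^{-1}_{(a_1b_1)\dots(a_{n+2}b_{n+2})})$, $H$ a global $(n+1)$-form, $\omega^s$ local $s$-forms ($s\ge0$) on intersections of $n+1-s$ product sets, $\omega^{-1}$ locally constant $2\pi\mathbb Z$-valued; components with repeated index vanish. $\check d=\delta+(-1)^{r+1}d$ on Čech degree $r$ (with $\delta$ the Čech coboundary, $d$ exterior derivative), the top component of $\check d(H,\omega)$ being $H|-d\omega^n$. For $(a)=(a_1..a_r)$, $(b)=(b_1..b_k)$, define the local $(n+2-r-k)$-form $T^{(a)}_{(b)}\omega=\sum_{\gamma\in\mathcal D}(-1)^{A(\gamma)}\omega^{n+2-k-r}_\gamma$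 on $(U_{a_1}\cap\dots\cap U_{a_r})\times(U_{b_1}\cap\dots\cap U_{b_k})$, where $\mathcal D$ is the set of lattice paths $\gamma=((a_{p_1}b_{q_1}),\dots,(a_{p_{r+k-1}}b_{q_{r+k-1}}))$ in the grid $\{(a_pb_q)\}$ from $(a_1b_1)$ to $(a_rb_k)$ moving only right or upward, $A(\gamma)$ is the area between $\gamma$ and the $b$-axis, and $\omega_\gamma=\omega_{(a_{p_1}b_{q_1})\dots(a_{p_{r+k-1}}b_{q_{r+k-1}})}$. $\delta_a$ (resp. $\delta_b$) denotes the Čech coboundary in the first (resp. second) multi-index, e.g. $[\delta_bT^{(a)}_{(\cdot)}\omega]_{(b)}=\sum_{j}(-1)^{j+1}T^{(a)}_{(b_1..\hat b_j..b_k)}\omega$. *)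

From HB Require Import structures.
From mathcomp Require Import all_boot all_order all_algebra.
Set Implicit Arguments. Unset Strict Implicit. Unset Printing Implicit Defensive.
Import Order.TTheory GRing.Theory Num.Theory.
Local Open Scope ring_scope.

(* Abstract model of the sheaf of (total) differential forms on the finite   *)
(* intersections of a cover indexed by I.  A sequence S : seq I stands for   *)
(* the open set U_S = \bigcap_{i in S} U_i (U_[::] is the whole space).      *)
(*   Om S   = forms (of all degrees, incl. the locally constant 2piZ-valued  *)
(*            "degree -1" functions) on U_S;                                 *)
(*   res S S' = restriction Om S -> Om S' (meaningful when S \subset S',     *)
(*            i.e. U_S' \subset U_S; only used in that case);               *)
(*   d S    = exterior derivative (d : Om^{-1} -> Om^0 is the inclusion).    *)
Definition subseqset (I : eqType) (S S' : seq I) : bool :=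
  all (fun i => i \in S') S.

Record FormSys (I : eqType) := {
  Om : seq I -> zmodType;
  res : forall S S' : seq I, {additive Om S -> Om S'};
  dext : forall S : seq I, {additive Om S -> Om S};
  res_id : forall S (x : Om S), res S S x = x;
  res_comp : forall S S' S'' (x : Om S), subseqset S S' -> subseqset S' S'' ->
     res S' S'' (res S S' x) = res S S'' x;
  dext_res : forall S S' (x : Om S), subseqset S S' ->
     dext S' (res S S' x) = res S S' (dext S x);
  dext_dext : forall S (x : Om S), dext S (dext S x) = 0
}.

Section Cech.
Variables (I : eqType) (F : FormSys I).

(* the component at [::] is the global form H.                              *)
Definition cochain := forall S : seq I, Om F S.

Definition rem_at (T : Type) (j : nat) (s : seq T) : seq T :=
  take j s ++ drop j.+1 s.

(* non-flat differential n-cochain: H = w [::] is global, w_S has form degree *)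
(* n+1-|S|; components with |S| > n+2 (form degree < -1) do not exist (= 0) *)
(* and components with a repeated index vanish.                             *)
Definition is_diff_cochain (n : nat) (w : cochain) : Prop :=
  (forall S, ~~ uniq S -> w S = 0) /\ (forall S, (n.+2 < size S)%N -> w S = 0).

(* check d = delta + (-1)^(r+1) d on Cech degree r = |S|-1 *)
Definition dcheck (w : cochain) : cochain := fun S =>
  \sum_(j < size S) (res F (rem_at j S) S (w (rem_at j S)) *~ ((-1) ^+ j))
  + dext F S (w S) *~ ((-1) ^+ size S).

End Cech.

Section Paths.
Variables (A B : eqType).

(* lattice path given by its steps: true = up (next a), false = right (next b) *)
Fixpoint walk (st : seq bool) (a : seq A) (b : seq B) : seq (A * B) :=
  match a, b with
  | x :: a', y :: b' =>
      (x, y) :: match st with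
                | [::] => [::]
                | s :: st' => if s then walk st' a' b else walk st' a b'
                end
  | _, _ => [::]
  end.

(* area between the path and the b-axis (b horizontal, a vertical) *)
Fixpoint parea (h : nat) (st : seq bool) : nat :=
  match st with
  | [::] => 0
  | s :: st' => if s then parea h.+1 st' else h + parea h st'
  end.

Definition grid (a : seq A) (b : seq B) : seq (A * B) :=
  [seq (x, y) | x <- a, y <- b].

Variable F : FormSys (A * B)%type.

(* T^{(a)}_{(b)} w, a form on (U_{a_1}..U_{a_r}) x (U_{b_1}..U_{b_k}) = U_grid *)
Definition Tab (w : cochain F) (a : seq A) (b : seq B) : Om F (grid a b) :=
  \sum_(st : ((size a).-1 + (size b).-1).-tuple bool | (count id st == (size a).-1)%N)
     (res F (walk st a b) (grid a b) (w (walk st a b)) *~ ((-1) ^+ parea 0 st)).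

Definition deltaA (w : cochain F) (a : seq A) (b : seq B) : Om F (grid a b) :=
  \sum_(j < size a)
     (res F (grid (rem_at j a) b) (grid a b) (Tab w (rem_at j a) b) *~ ((-1) ^+ j)).

Definition deltaB (w : cochain F) (a : seq A) (b : seq B) : Om F (grid a b) :=
  \sum_(j < size b)
     (res F (grid a (rem_at j b)) (grid a b) (Tab w a (rem_at j b)) *~ ((-1) ^+ j)).

End Paths.

From HB Require Import structures.
From mathcomp Require Import all_boot all_order all_algebra.
From mathcomp Require Import zify ring.
Set Implicit Arguments. Unset Strict Implicit. Unset Printing Implicit Defensive.
Import GRing.Theory.
Local Open Scope ring_scope.

(* T^(a)_(b) is a signed sum over the monotone lattice paths of the grid
   a x b.  Since d commutes with restrictions it passes through T, giving the
   first term.  For the Cech part, deleting the j-th vertex of a path either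
   deletes a corner, and these terms cancel in pairs against the path turning
   the other way at that corner, or deletes the only vertex of the path in some
   row or column (an endpoint, or an inner vertex of a straight run); what
   remains is then a path of the grid with that row or column removed, and
   these terms assemble into delta_a and delta_b.  Formally, both sides satisfy
   the same recursion on the first step of the paths. *)

(* The trivial extension [int * M] with [(m, x) * (n, y) = (m n, x n + y m)]
   is a commutative ring into which [M] embeds additively and injectively, so
   [ring] decides identities between integer combinations of elements of [M]. *)
Section TrivialExtension.
Variable M : zmodType.

Definition zext : Type := (int * M)%type.
HB.instance Definition _ := GRing.Zmodule.on zext.

Definition zext_one : zext := (1, 0).
Definition zext_mul (u v : zext) : zext := (u.1 * v.1, u.2 *~ v.1 + v.2 *~ u.1).

Lemma zext_mulA : associative zext_mul.
Proof.
move=> [m x] [n y] [p z]; congr (_, _); first by rewrite /= mulrA.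
rewrite /= !mulrzDl -!mulrzA addrA; congr (_ + _ + _); by rewrite mulrC.
Qed.

Lemma zext_mulC : commutative zext_mul.
Proof. by move=> [m x] [n y]; rewrite /zext_mul /= mulrC addrC. Qed.

Lemma zext_mul1 : left_id zext_one zext_mul.
Proof. by move=> [n y]; rewrite /zext_mul /= mul1r mul0rz add0r. Qed.

Lemma zext_mulDl : left_distributive zext_mul +%R.
Proof.
move=> [m x] [n y] [p z]; congr (_, _); first by rewrite /= mulrDl.
by rewrite /= mulrzDl mulrzDr addrACA.
Qed.

Lemma zext_one_neq0 : zext_one != 0.
Proof. by apply/negP => /eqP [] /eqP. Qed.

HB.instance Definition _ := GRing.Zmodule_isComNzRing.Build zext
  zext_mulA zext_mulC zext_mul1 zext_mulDl zext_one_neq0.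

Definition zext_in (x : M) : zext := (0, x).

Lemma zext_in_is_additive : zmod_morphism zext_in.
Proof. by []. Qed.

HB.instance Definition _ :=
  GRing.isZmodMorphism.Build M zext zext_in zext_in_is_additive.

Lemma zext_in_inj : injective zext_in.
Proof. by move=> x y []. Qed.

End TrivialExtension.

Ltac zmod_ring := apply: zext_in_inj; ring.

Lemma rem_at0 (T : Type) (x : T) s : rem_at 0 (x :: s) = s.
Proof. by rewrite /rem_at /= drop0. Qed.

Lemma rem_atS (T : Type) (x : T) s i : rem_at i.+1 (x :: s) = x :: rem_at i s.
Proof. by []. Qed.

Lemma size_rem_at (T : Type) i (s : seq T) :
  (i < size s)%N -> size (rem_at i s) = (size s).-1.
Proof. by move=> lt_i_s; rewrite /rem_at size_cat size_take size_drop lt_i_s; lia. Qed.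

Lemma subseqset_rem_at (T : eqType) i (s : seq T) : subseqset (rem_at i s) s.
Proof. by apply/allP => z; rewrite mem_cat => /orP [/mem_take|/mem_drop]. Qed.

Fixpoint bool_seqs (n : nat) : seq (seq bool) :=
  if n is n'.+1 then [seq true :: s | s <- bool_seqs n'] ++ [seq false :: s | s <- bool_seqs n']
  else [:: [::]].

Lemma mem_cons_map (T : eqType) (x y : T) s (l : seq (seq T)) :
  (x :: s \in [seq y :: t | t <- l]) = (x == y) && (s \in l).
Proof.
apply/mapP/andP => [[t t_l [-> ->]] // | [/eqP -> s_l]].
by exists s.
Qed.

Lemma mem_bool_seqs n s : (s \in bool_seqs n) = (size s == n).
Proof.
elim: n s => [|n IHn] [|c s] //=.
  by rewrite mem_cat; apply/norP; split; apply/mapP => -[].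
by rewrite mem_cat eqSS -IHn !mem_cons_map; case: c; rewrite ?orbF.
Qed.

Lemma uniq_bool_seqs n : uniq (bool_seqs n).
Proof.
have cons_inj (c : bool) : injective (cons c) by move=> ? ? [].
elim: n => //= n IHn; rewrite cat_uniq !map_inj_uniq // IHn andbT /=.
by apply/hasPn => _ /mapP [s _ ->]; rewrite mem_cons_map.
Qed.

Lemma big_tuple_bool_seqs (M : zmodType) n (P : pred (seq bool)) (G : seq bool -> M) :
  \sum_(t : n.-tuple bool | P t) G t = \sum_(s <- bool_seqs n | P s) G s.
Proof.
rewrite -(big_map (@tval n bool) P G); apply/perm_big/uniq_perm.
- by rewrite map_inj_uniq ?index_enum_uniq //; apply: val_inj.
- exact: uniq_bool_seqs.
move=> s; rewrite mem_bool_seqs; apply/mapP/eqP => [[t _ ->] | size_s].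
  by rewrite size_tuple.
by exists (Tuple (introT eqP size_s)); rewrite ?mem_index_enum.
Qed.

Lemma big_bool_seqsS (M : zmodType) m (P : pred (seq bool)) (G : seq bool -> M) :
  \sum_(s <- bool_seqs m.+1 | P s) G s =
  \sum_(s <- bool_seqs m | P (true :: s)) G (true :: s) +
  \sum_(s <- bool_seqs m | P (false :: s)) G (false :: s).
Proof. by rewrite big_cat !big_map. Qed.

Lemma mem_grid (A B : eqType) (a : seq A) (b : seq B) p :
  (p \in grid a b) = (p.1 \in a) && (p.2 \in b).
Proof.
apply/allpairsP/andP => [[q [q1 q2 ->]] // | [p1 p2]].
by exists p; case: p p1 p2.
Qed.

Lemma subseqset_grid_rem_at_l (A B : eqType) i (a : seq A) (b : seq B) :
  subseqset (grid (rem_at i a) b) (grid a b).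
Proof.
apply/allP => p; rewrite !mem_grid => /andP [p1 ->]; rewrite andbT.
exact: (allP (subseqset_rem_at i a)).
Qed.

Lemma subseqset_grid_rem_at_r (A B : eqType) j (a : seq A) (b : seq B) :
  subseqset (grid a (rem_at j b)) (grid a b).
Proof.
apply/allP => p; rewrite !mem_grid => /andP [-> p2] /=.
exact: (allP (subseqset_rem_at j b)).
Qed.

Section PathSum.
Variables (A B : eqType).
Implicit Types (M : zmodType) (a : seq A) (b : seq B).

(* Recursion on the first step of the path from (x, y); an initial up-step
   raises each of the [size b'] later right-steps by one, whence its sign. *)
Fixpoint path_sum M a : (seq (A * B) -> M) -> seq B -> M :=
  match a with
  | [::] => fun phi _ => phi [::]
  | x :: a' => fix path_sum_b phi b := match b with
     | [::] => phi [::]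
     | y :: b' =>
       (if (size a' == 0)%N && (size b' == 0)%N then phi [:: (x, y)] else 0)
       + (if (0 < size a')%N then
            path_sum a' (fun S => phi ((x, y) :: S)) (y :: b') *~ ((-1) ^+ size b')
          else 0)
       + (if (0 < size b')%N then path_sum_b (fun S => phi ((x, y) :: S)) b' else 0)
     end
  end.

#[global] Arguments path_sum : simpl never.

Lemma path_sum_cons M x a' y b' (phi : seq (A * B) -> M) :
  path_sum (x :: a') phi (y :: b') =
    (if (size a' == 0)%N && (size b' == 0)%N then phi [:: (x, y)] else 0)
    + (if (0 < size a')%N then
         path_sum a' (fun S => phi ((x, y) :: S)) (y :: b') *~ ((-1) ^+ size b')
       else 0)
    + (if (0 < size b')%N then path_sum (x :: a') (fun S => phi ((x, y) :: S)) b' else 0).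
Proof. by []. Qed.

Lemma eq_path_sum M a b (phi1 phi2 : seq (A * B) -> M) :
  phi1 =1 phi2 -> path_sum a phi1 b = path_sum a phi2 b.
Proof.
elim: a phi1 phi2 b => [|x a IHa] phi1 phi2 b eq_phi; first exact: eq_phi.
elim: b phi1 phi2 eq_phi => [|y b IHb] phi1 phi2 eq_phi; first exact: eq_phi.
by rewrite !path_sum_cons eq_phi (IHa _ (fun S => phi2 ((x, y) :: S)))
  ?(IHb _ (fun S => phi2 ((x, y) :: S))).
Qed.

Lemma path_sum_ext M a b (phi1 phi2 : seq (A * B) -> M) :
  (0 < size a)%N -> (0 < size b)%N ->
  (forall S, subseqset S (grid a b) -> size S = (size a + size b).-1 ->
     phi1 S = phi2 S) ->
  path_sum a phi1 b = path_sum a phi2 b.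
Proof.
elim: a phi1 phi2 b => [|x a IHa] phi1 phi2 b // _.
elim: b phi1 phi2 => [|y b IHb] phi1 phi2 // _ eq_phi.
have xy_grid : (x, y) \in grid (x :: a) (y :: b) by rewrite mem_grid !mem_head.
rewrite !path_sum_cons; congr (_ + _ + _).
- case: ifP => // /andP [/eqP size_a /eqP size_b]; apply: eq_phi => /=.
    by rewrite /subseqset /= xy_grid.
  by rewrite size_a size_b.
- case: ifP => // a_gt0; congr (_ *~ _); apply: IHa => // S sub_S size_S.
  apply: eq_phi; last by rewrite /= size_S /=; lia.
  rewrite /subseqset /= xy_grid; apply/allP => p /(allP sub_S).
  by rewrite !mem_grid => /andP [p1 ->]; rewrite inE p1 orbT.
- case: ifP => // b_gt0; apply: IHb => // S sub_S size_S.
  apply: eq_phi; last by rewrite /= size_S /=; lia.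
  rewrite /subseqset /= xy_grid; apply/allP => p /(allP sub_S).
  by rewrite !mem_grid => /andP [-> p2]; rewrite inE p2 orbT.
Qed.

Lemma if_addr M (c : bool) (u v : M) :
  (if c then u + v else 0) = (if c then u else 0) + (if c then v else 0).
Proof. by case: c; rewrite ?addr0. Qed.

Lemma path_sumD M a b (phi1 phi2 : seq (A * B) -> M) :
  path_sum a (fun S => phi1 S + phi2 S) b = path_sum a phi1 b + path_sum a phi2 b.
Proof.
elim: a phi1 phi2 b => [|x a IHa] phi1 phi2 b //.
elim: b phi1 phi2 => [|y b IHb] phi1 phi2 //.
rewrite !path_sum_cons (IHa (fun S => phi1 ((x, y) :: S)))
  (IHb (fun S => phi1 ((x, y) :: S))) mulrzDl !if_addr.
by zmod_ring.
Qed.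

Lemma path_sum_morph M (N : zmodType) (f : {additive M -> N}) a b (phi : seq (A * B) -> M) :
  path_sum a (fun S => f (phi S)) b = f (path_sum a phi b).
Proof.
elim: a phi b => [|x a IHa] phi b //.
elim: b phi => [|y b IHb] phi //.
rewrite !path_sum_cons (IHa (fun S => phi ((x, y) :: S)))
  (IHb (fun S => phi ((x, y) :: S))) !raddfD -!raddfMz.
by congr (_ + _ + _); case: ifP; rewrite ?raddf0.
Qed.

Lemma path_sumB M a b (phi1 phi2 : seq (A * B) -> M) :
  path_sum a (fun S => phi1 S - phi2 S) b = path_sum a phi1 b - path_sum a phi2 b.
Proof. by rewrite path_sumD (path_sum_morph -%R). Qed.

Lemma path_sumMz M a b (phi : seq (A * B) -> M) c :
  path_sum a (fun S => phi S *~ c) b = path_sum a phi b *~ c.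
Proof.
elim: a phi b => [|x a IHa] phi b //.
elim: b phi => [|y b IHb] phi //.
rewrite !path_sum_cons (IHa (fun S => phi ((x, y) :: S)))
  (IHb (fun S => phi ((x, y) :: S))) !mulrzDl mulrzAC.
by congr (_ + _ + _); case: ifP; rewrite ?mul0rz.
Qed.

(* Starting at height h adds h to the area under each of the
   [(size b).-1] right-steps. *)
Lemma sum_walk_path_sum M (phi : seq (A * B) -> M) a b h :
  (0 < size a)%N -> (0 < size b)%N ->
  \sum_(s <- bool_seqs ((size a).-1 + (size b).-1) | count id s == (size a).-1)
     phi (walk s a b) *~ ((-1) ^+ parea h s)
  = path_sum a phi b *~ ((-1) ^+ (h * (size b).-1)).
Proof.
elim: a phi b h => [|x a' IHa] phi b h // _.
elim: b phi h => [|y b' IHb] phi h // _.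
rewrite path_sum_cons /=.
have [size0|size_gt0] := posnP (size a' + size b').
  clear IHa IHb; case: a' size0 => [|? ?] //; case: b' => [|? ?] // _.
  by rewrite big_cons big_nil /= !addr0 muln0.
rewrite -(prednK size_gt0) big_bool_seqsS.
set m := (size a' + size b').-1.
set psi := fun S => phi ((x, y) :: S).
have up_sum : \sum_(s <- bool_seqs m | count id (true :: s) == size a')
    phi (walk (true :: s) (x :: a') (y :: b')) *~ (-1) ^+ parea h (true :: s)
  = if (0 < size a')%N then
      path_sum a' psi (y :: b') *~ (-1) ^+ size b' *~ (-1) ^+ (h * size b')
    else 0.
  case: posnP => [a'0 | a'_gt0].
    by rewrite big_pred0 // => s; rewrite a'0.
  have := IHa psi (y :: b') h.+1 a'_gt0 isT; rewrite /=.
  rewrite (_ : ((size a').-1 + size b' = m)%N); last by rewrite /m; lia.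
  rewrite -mulrzA -exprD -mulSn => <-.
  by apply: eq_bigl => s /=; rewrite -{1}(prednK a'_gt0) eqSS.
have right_sum : \sum_(s <- bool_seqs m | count id (false :: s) == size a')
    phi (walk (false :: s) (x :: a') (y :: b')) *~ (-1) ^+ parea h (false :: s)
  = if (0 < size b')%N then path_sum (x :: a') psi b' *~ (-1) ^+ (h * size b') else 0.
  case: posnP => [b'0 | b'_gt0].
    rewrite big_seq_cond big_pred0 // => s; rewrite mem_bool_seqs /=.
    case: eqP => // size_s; apply/eqP.
    by have := count_size id s; rewrite size_s /m b'0; lia.
  have := IHb psi h b'_gt0; rewrite /=.
  rewrite (_ : (size a' + (size b').-1 = m)%N); last by rewrite /m; lia.
  rewrite -[in (h * size b')%N](prednK b'_gt0) mulnSr exprD mulrzA => <-.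
  rewrite mulrz_suml; apply: eq_bigr => s _.
  by rewrite (@exprD _ _ h (parea h s)) mulrzA mulrzAC.
rewrite up_sum right_sum (_ : (size a' == 0)%N && (size b' == 0)%N = false); last first.
  by apply/negbTE; lia.
rewrite add0r mulrzDl; congr (_ + _); by case: ifP; rewrite ?mul0rz.
Qed.

End PathSum.

Section Coboundary.
Variables (A B : eqType) (M : zmodType).
Implicit Types (phi : seq (A * B) -> M) (a : seq A) (b : seq B).

Definition coboundary phi S : M :=
  \sum_(j < size S) phi (rem_at j S) *~ ((-1) ^+ j).

Definition delta_a phi a b : M :=
  \sum_(i < size a) path_sum (rem_at i a) phi b *~ ((-1) ^+ i).

Definition delta_b phi a b : M :=
  \sum_(j < size b) path_sum a phi (rem_at j b) *~ ((-1) ^+ j).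

Definition delta_a_tail phi x a' b : M :=
  \sum_(i < size a') path_sum (x :: rem_at i a') phi b *~ ((-1) ^+ i).

Definition delta_b_tail phi a y b' : M :=
  \sum_(j < size b') path_sum a phi (y :: rem_at j b') *~ ((-1) ^+ j).

Lemma coboundary_nil phi : coboundary phi [::] = 0.
Proof. by rewrite /coboundary big_ord0. Qed.

Lemma coboundary_cons phi p S :
  coboundary phi (p :: S) = phi S - coboundary (fun S => phi (p :: S)) S.
Proof.
rewrite /coboundary big_ord_recl rem_at0 expr0 mulr1z -sumrN.
by congr (_ + _); apply: eq_bigr => i _; rewrite rem_atS exprS mulN1r mulrNz.
Qed.

Lemma delta_a_cons phi x a' b :
  delta_a phi (x :: a') b = path_sum a' phi b - delta_a_tail phi x a' b.
Proof.
rewrite /delta_a big_ord_recl rem_at0 expr0 mulr1z -sumrN.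
by congr (_ + _); apply: eq_bigr => i _; rewrite rem_atS exprS mulN1r mulrNz.
Qed.

Lemma delta_b_cons phi a y b' :
  delta_b phi a (y :: b') = path_sum a phi b' - delta_b_tail phi a y b'.
Proof.
rewrite /delta_b big_ord_recl rem_at0 expr0 mulr1z -sumrN.
by congr (_ + _); apply: eq_bigr => i _; rewrite rem_atS exprS mulN1r mulrNz.
Qed.

Lemma delta_a_tail_cons phi x a' y b' :
  delta_a_tail phi x a' (y :: b') =
    (if (1 < size a')%N then
       delta_a (fun S => phi ((x, y) :: S)) a' (y :: b') *~ ((-1) ^+ size b')
     else 0)
  + (if (0 < size b')%N then delta_a_tail (fun S => phi ((x, y) :: S)) x a' b' else 0)
  + (if (size a' == 1)%N && (size b' == 0)%N then phi [:: (x, y)] else 0).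
Proof.
rewrite /delta_a_tail; case: a' => [|z [|z' a'']].
- by rewrite big_ord0; case: (0 < size b')%N; rewrite ?big_ord0 /= !addr0.
- rewrite !big_ord1 !rem_at0 expr0 !mulr1z path_sum_cons /= add0r addr0 addrC.
  by case: (size b').
- under eq_bigr => i _ do rewrite path_sum_cons (size_rem_at (ltn_ord i)) /=.
  rewrite /= addr0.
  under eq_bigr => i _ do rewrite add0r mulrzDl mulrzAC.
  rewrite big_split /= -mulrz_suml; congr (_ + _).
  by case: (0 < size b')%N => //; rewrite big1 // => i _; exact: mul0rz.
Qed.

Lemma delta_b_tail_cons phi x a' y b' :
  delta_b_tail phi (x :: a') y b' =
    (if (0 < size a')%N then
       delta_b_tail (fun S => phi ((x, y) :: S)) a' y b' *~ ((-1) ^+ (size b').-1)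
     else 0)
  + (if (1 < size b')%N then delta_b (fun S => phi ((x, y) :: S)) (x :: a') b' else 0)
  + (if (size a' == 0)%N && (size b' == 1)%N then phi [:: (x, y)] else 0).
Proof.
rewrite /delta_b_tail; case: b' => [|w [|w' b'']].
- by rewrite big_ord0; case: (0 < size a')%N; rewrite ?big_ord0 ?mul0rz /= ?andbF !addr0.
- rewrite !big_ord1 !rem_at0 expr0 !mulr1z path_sum_cons /= !addr0 addrC.
  by case: (size a').
- under eq_bigr => i _ do rewrite path_sum_cons (size_rem_at (ltn_ord i)) /=.
  rewrite /= andbF addr0.
  under eq_bigr => i _ do rewrite add0r mulrzDl.
  rewrite big_split /=; congr (_ + _).
  case: (0 < size a')%N; last by rewrite big1 // => i _; exact: mul0rz.
  by rewrite mulrz_suml; apply: eq_bigr => i _; rewrite mulrzAC.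
Qed.

Lemma path_sum_coboundary phi a b :
  (0 < size a)%N -> (0 < size b)%N ->
  path_sum a (coboundary phi) b =
    (if (1 < size a)%N then delta_a phi a b *~ ((-1) ^+ (size b).+1) else 0)
  + (if (1 < size b)%N then delta_b phi a b else 0)
  + (if (size a == 1)%N && (size b == 1)%N then phi [::] else 0).
Proof.
elim: a phi b => [|x a' IHa] phi b // _.
elim: b phi => [|y b' IHb] phi // _.
set psi := fun S => phi ((x, y) :: S).
have coboundary_psi : coboundary phi \o cons (x, y) =1 fun S => phi S - coboundary psi S.
  by move=> S; rewrite /= coboundary_cons.
rewrite path_sum_cons !(eq_path_sum _ _ coboundary_psi) !path_sumB.
rewrite coboundary_cons coboundary_nil subr0.
rewrite delta_a_cons delta_b_cons delta_a_tail_cons delta_b_tail_cons.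
have -> : delta_a_tail psi x a' b' = path_sum a' psi b' - delta_a psi (x :: a') b'.
  by rewrite delta_a_cons opprB addrC subrK.
have -> : delta_b_tail psi a' y b' = path_sum a' psi b' - delta_b psi a' (y :: b').
  by rewrite delta_b_cons opprB addrC subrK.
move: (IHa psi (y :: b')) (IHb psi) => /=.
case: (size a') => [|[|k]]; case: (size b') => [|[|l]] IH_up IH_right.
all: rewrite /= ?IH_up ?IH_right //= ?exprS ?expr0.
all: try (rewrite -(signr_odd _ l); case: (odd l); rewrite ?expr0 ?expr1).
all: zmod_ring.
Qed.

End Coboundary.

Section Products.
Variables (A B : eqType) (F : FormSys (A * B)%type).
Implicit Types (w : cochain F) (a : seq A) (b : seq B).

Definition restrict_to_grid w a b (S : seq (A * B)) : Om F (grid a b) :=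
  res F S (grid a b) (w S).

Lemma Tab_path_sum w a b :
  (0 < size a)%N -> (0 < size b)%N -> Tab w a b = path_sum a (restrict_to_grid w a b) b.
Proof.
move=> a_gt0 b_gt0; rewrite /Tab (big_tuple_bool_seqs _ (fun s => count id s == _)
  (fun s => res F (walk s a b) (grid a b) (w (walk s a b)) *~ ((-1) ^+ parea 0 s))).
by rewrite (sum_walk_path_sum (restrict_to_grid w a b) 0 a_gt0 b_gt0) mul0n expr0.
Qed.

Lemma Tab_dcheck w a b :
  (0 < size a)%N -> (0 < size b)%N ->
  Tab (dcheck w) a b =
    path_sum a (coboundary (restrict_to_grid w a b)) b
    + dext F _ (Tab w a b) *~ ((-1) ^+ (size a + size b).-1).
Proof.
move=> a_gt0 b_gt0; rewrite !Tab_path_sum // -(path_sum_morph (dext F _)).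
rewrite -path_sumMz -path_sumD; apply: path_sum_ext => // S sub_S size_S.
rewrite /coboundary /restrict_to_grid /dcheck raddfD raddf_sum raddfMz size_S.
congr (_ + _).
- apply: eq_bigr => j _; rewrite raddfMz res_comp //; exact: subseqset_rem_at.
- by rewrite dext_res.
Qed.

Lemma delta_a_restrict w a b :
  (1 < size a)%N -> (0 < size b)%N ->
  delta_a (restrict_to_grid w a b) a b = deltaA w a b.
Proof.
move=> a_gt1 b_gt0; rewrite /delta_a /deltaA; apply: eq_bigr => i _; congr (_ *~ _).
have rem_gt0 : (0 < size (rem_at i a))%N by rewrite size_rem_at //; lia.
rewrite Tab_path_sum // -path_sum_morph; apply: path_sum_ext => // S sub_S _.
by rewrite /restrict_to_grid res_comp //; exact: subseqset_grid_rem_at_l.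
Qed.

Lemma delta_b_restrict w a b :
  (0 < size a)%N -> (1 < size b)%N ->
  delta_b (restrict_to_grid w a b) a b = deltaB w a b.
Proof.
move=> a_gt0 b_gt1; rewrite /delta_b /deltaB; apply: eq_bigr => j _; congr (_ *~ _).
have rem_gt0 : (0 < size (rem_at j b))%N by rewrite size_rem_at //; lia.
rewrite Tab_path_sum // -path_sum_morph; apply: path_sum_ext => // S sub_S _.
by rewrite /restrict_to_grid res_comp //; exact: subseqset_grid_rem_at_r.
Qed.

End Products.

Unset Implicit Arguments. Set Strict Implicit.

Theorem mainTheorem12 (A B : eqType) (F : FormSys (A * B)%type) (n : nat)
  (w : cochain F) (Hw : is_diff_cochain n w)
  (a : seq A) (b : seq B) (Ha : (0 < size a)%N) (Hb : (0 < size b)%N)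
  (Hab : (2 < size a + size b)%N) :
  Tab (dcheck w) a b =
    dext F _ (Tab w a b) *~ ((-1) ^+ (size a + size b + 1))
    + (if (1 < size a)%N then deltaA w a b *~ ((-1) ^+ (size b + 1)) else 0)
    + (if (1 < size b)%N then deltaB w a b else 0).
Proof.
rewrite Tab_dcheck // path_sum_coboundary //.
have -> : (size a == 1)%N && (size b == 1)%N = false by apply/negbTE; lia.
have -> : (-1) ^+ (size a + size b).-1 = (-1) ^+ (size a + size b + 1) :> int.
  rewrite (_ : (size a + size b + 1 = (size a + size b).-1 + 2)%N); last by lia.
  by rewrite exprD sqrrN expr1n mulr1.
rewrite !addn1; case: ifP => [a_gt1 | _]; case: ifP => [b_gt1 | _].
all: rewrite ?delta_a_restrict ?delta_b_restrict //; zmod_ring.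
Qed.
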